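(* Let $(V,L,\varphi,E)$ be an extendible valuation system. Then the valuation system $(V,\overline L,\overline\varphi,E)$ is complete.
   Context: A valuation system $(V,L,\varphi,E)$ consists of: (i) a lattice $V$ which is $\sigma$-distributive (for every $a\in V$ and sequence $(b_n)$ with existing infimum, $\bigwedge_n(a\vee b_n)$ exists and equals $a\vee\bigwedge_n b_n$, and dually for suprema); (ii) a sublattice $L$ of $V$; (iii) a partially ordered abelian group $E$ which is R-complete (whenever $x_1\ge x_2\ge\cdots$ and $y_1\ge y_2\ge\cdots$ in $E$ are such that $\bigwedge_n(x_n+y_n)$ exists, $\bigwedge_n x_n$ and $\bigwedge_n y_n$ exist; dually for increasing sequences); (iv) a valuation $\varphi:L\to E$ (order-preserving, $\varphi(a\wedge b)+\varphi(a\vee b)=\varphi(a)+\varphi(b)$). A decreasing (resp. increasing) sequence $(a_n)$ in $L$ is $\varphi$-convergent if $\bigwedge_n a_n$ exists in $V$ and $\bigwedge_n\varphi(a_n)$ exists in $E$ (resp. with suprema). The system is $\Pi$-complete if for every $\varphi$-convergent decreasing $(a_n)$ in $L$, $\bigwedge_n a_n\in L$ and $\varphi(\bigwedge_n a_n)=\bigwedge_n\varphi(a_n)$; $\Sigma$-complete dually; complete if both. $\Pi L:=\{\bigwedge_n a_n:(a_n)\ \varphi\text{-convergent decreasing}\}$ and $\varphi$ is $\Pi$-extendible if there is a valuation $\Pi\varphi:\Pi L\to E$ with $\Pi\varphi(\bigwedge_n a_n)=\bigwedge_n\varphi(a_n)$; $\Sigma L,\Sigma\varphi$ dually. Hierarchy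 (transfinite recursion): $\Pi_0\varphi=\Sigma_0\varphi=\varphi$; $\varphi$ is $\Pi_{\alpha+1}$-extendible iff it is $\Sigma_\alpha$-extendible and $\Sigma_\alpha\varphi$ is $\Pi$-extendible, with $\Pi_{\alpha+1}\varphi=\Pi(\Sigma_\alpha\varphi)$; $\varphi$ is $\Sigma_{\alpha+1}$-extendible iff it is $\Pi_\alpha$-extendible and $\Pi_\alpha\varphi$ is $\Sigma$-extendible, with $\Sigma_{\alpha+1}\varphi=\Sigma(\Pi_\alpha\varphi)$; at a limit $\lambda$, $\Pi_\lambda$-extendible iff $\Pi_\alpha$-extendible for all $\alpha<\lambda$, and $\Pi_\lambda\varphi$ is the common extension of the $\Pi_\alpha\varphi$ on $\bigcup_{\alpha<\lambda}\Pi_\alpha L$; similarly $\Sigma_\lambda$. The hierarchy has collapsed at $Q$, where $Q=\Pi_\alpha\varphi$ or $Q=\Sigma_\alpha\varphi$, if $\varphi$ is $\Pi_{\alpha+1}$- and $\Sigma_{\alpha+1}$-extendible and $\Pi(Q)=Q=\Sigma(Q)$. $\varphi$ is extendible if the hierarchy has collapsed at some $Q$; this $Q$ is then unique and is denoted $\overline\varphi:\overline L\to E$. *)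

From HB Require Import structures.
From mathcomp Require Import all_boot all_order all_algebra.
Set Implicit Arguments. Unset Strict Implicit. Unset Printing Implicit Defensive.
Import Order.TTheory GRing.Theory Num.Theory.

Local Open Scope order_scope.

Section Bounds.
Context {d : Order.disp_t} {T : porderType d}.

Definition is_inf (a : nat -> T) (x : T) : Prop :=
  (forall n, x <= a n) /\ (forall y, (forall n, y <= a n) -> y <= x).

Definition is_sup (a : nat -> T) (x : T) : Prop :=
  (forall n, a n <= x) /\ (forall y, (forall n, a n <= y) -> x <= y).

Definition inf_exists (a : nat -> T) : Prop := exists x, is_inf a x.
Definition sup_exists (a : nat -> T) : Prop := exists x, is_sup a x.

Definition decreasing (a : nat -> T) : Prop := forall n, a n.+1 <= a n.
Definition increasing (a : nat -> T) : Prop := forall n, a n <= a n.+1.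
End Bounds.

Definition sigma_distributive {d : Order.disp_t} (V : latticeType d) : Prop :=
  (forall (a : V) (b : nat -> V) (x : V),
      is_inf b x -> is_inf (fun n => a `|` b n) (a `|` x)) /\
  (forall (a : V) (b : nat -> V) (x : V),
      is_sup b x -> is_sup (fun n => a `&` b n) (a `&` x)).

Definition po_group (E : porderZmodType) : Prop :=
  forall x y z : E, x <= y -> (x + z)%R <= (y + z)%R.

Definition R_complete (E : porderZmodType) : Prop :=
  (forall x y : nat -> E, decreasing x -> decreasing y ->
     inf_exists (fun n => x n + y n)%R -> inf_exists x /\ inf_exists y) /\
  (forall x y : nat -> E, increasing x -> increasing y ->
     sup_exists (fun n => x n + y n)%R -> sup_exists x /\ sup_exists y).

(** * sublattices and valuations.  A (partial) valuation on a subset L of V is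
    represented by the predicate L together with a total function V -> E,
    of which only the values on L matter. *)
Definition sublattice {d : Order.disp_t} {V : latticeType d} (L : V -> Prop) : Prop :=
  forall a b, L a -> L b -> L (a `&` b) /\ L (a `|` b).

Definition valuation {d : Order.disp_t} {V : latticeType d} {E : porderZmodType}
    (L : V -> Prop) (phi : V -> E) : Prop :=
  (forall a b, L a -> L b -> a <= b -> phi a <= phi b) /\
  (forall a b, L a -> L b -> (phi (a `&` b) + phi (a `|` b) = phi a + phi b)%R).

Section Extensions.
Context {d : Order.disp_t} {V : latticeType d} {E : porderZmodType}.

Definition pval := ((V -> Prop) * (V -> E))%type.

Definition in_seq (L : V -> Prop) (a : nat -> V) := forall n, L (a n).

Definition conv_dec (L : V -> Prop) (phi : V -> E) (a : nat -> V) : Prop :=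
  in_seq L a /\ decreasing a /\ inf_exists a /\ inf_exists (fun n => phi (a n)).

Definition conv_inc (L : V -> Prop) (phi : V -> E) (a : nat -> V) : Prop :=
  in_seq L a /\ increasing a /\ sup_exists a /\ sup_exists (fun n => phi (a n)).

Definition PiL (L : V -> Prop) (phi : V -> E) (x : V) : Prop :=
  exists a, conv_dec L phi a /\ is_inf a x.

Definition SigmaL (L : V -> Prop) (phi : V -> E) (x : V) : Prop :=
  exists a, conv_inc L phi a /\ is_sup a x.

(** [pi_ext p q] : phi (= p) is Pi-extendible and q = (Pi L, Pi phi);
    Pi L must carry a valuation, hence is required to be a sublattice. *)
Definition pi_ext (p q : pval) : Prop :=
  (forall x, q.1 x <-> PiL p.1 p.2 x) /\
  sublattice q.1 /\ valuation q.1 q.2 /\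
  (forall a x e, conv_dec p.1 p.2 a -> is_inf a x ->
      is_inf (fun n => p.2 (a n)) e -> q.2 x = e).

Definition sigma_ext (p q : pval) : Prop :=
  (forall x, q.1 x <-> SigmaL p.1 p.2 x) /\
  sublattice q.1 /\ valuation q.1 q.2 /\
  (forall a x e, conv_inc p.1 p.2 a -> is_sup a x ->
      is_sup (fun n => p.2 (a n)) e -> q.2 x = e).

Definition pv_eq (p q : pval) : Prop :=
  (forall x, p.1 x <-> q.1 x) /\ (forall x, p.1 x -> p.2 x = q.2 x).

Definition union_ext (I : Type) (lt : I -> I -> Prop) (f : I -> pval) (i : I)
    (q : pval) : Prop :=
  (forall x, q.1 x <-> exists j, lt j i /\ (f j).1 x) /\
  (forall j x, lt j i -> (f j).1 x -> q.2 x = (f j).2 x).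

(** Well-orders: the index type I with [lt] a strict well-order represents an
    initial segment of the ordinals (every well-order is isomorphic to one). *)
Definition strict_well_order (I : Type) (lt : I -> I -> Prop) : Prop :=
  (forall i, ~ lt i i) /\
  (forall i j k, lt i j -> lt j k -> lt i k) /\
  (forall i j, lt i j \/ i = j \/ lt j i) /\
  well_founded lt.

Definition immediate_pred (I : Type) (lt : I -> I -> Prop) (j i : I) : Prop :=
  lt j i /\ ~ (exists k, lt j k /\ lt k i).

(** [hierarchy L phi I lt P S] : for every index i in I (an ordinal alpha),
    phi is Pi_alpha- and Sigma_alpha-extendible, with
    P i = (Pi_alpha L, Pi_alpha phi) and S i = (Sigma_alpha L, Sigma_alpha phi). *)
Definition hierarchy (L : V -> Prop) (phi : V -> E)
    (I : Type) (lt : I -> I -> Prop) (P S : I -> pval) : Prop :=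
  strict_well_order lt /\
  forall i : I,
    ((forall j, ~ lt j i) -> pv_eq (P i) (L, phi) /\ pv_eq (S i) (L, phi)) /\
    (forall j, immediate_pred lt j i -> pi_ext (S j) (P i) /\ sigma_ext (P j) (S i)) /\
    ((exists j, lt j i) -> (forall j, ~ immediate_pred lt j i) ->
        union_ext lt P i (P i) /\ union_ext lt S i (S i)).

(** [vs_closure L phi Lbar phibar] : the hierarchy of phi has collapsed at
    Q = Pi_alpha phi or Q = Sigma_alpha phi (phi being Pi_{alpha+1}- and
    Sigma_{alpha+1}-extendible and Pi(Q) = Q = Sigma(Q)), and
    (Lbar, phibar) = Q, i.e. phibar = \overline{phi} : \overline{L} -> E. *)
Definition vs_closure (L : V -> Prop) (phi : V -> E)
    (Lbar : V -> Prop) (phibar : V -> E) : Prop :=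
  exists (I : Type) (lt : I -> I -> Prop) (P S : I -> pval) (i k : I),
    hierarchy L phi lt P S /\ immediate_pred lt i k /\
    (pv_eq (Lbar, phibar) (P i) \/ pv_eq (Lbar, phibar) (S i)) /\
    pi_ext (Lbar, phibar) (Lbar, phibar) /\ sigma_ext (Lbar, phibar) (Lbar, phibar).

Definition extendible (L : V -> Prop) (phi : V -> E) : Prop :=
  exists Lbar phibar, vs_closure L phi Lbar phibar.

Definition valuation_system (L : V -> Prop) (phi : V -> E) : Prop :=
  sigma_distributive V /\ sublattice L /\ po_group E /\ R_complete E /\
  valuation L phi.

Definition Pi_complete (L : V -> Prop) (phi : V -> E) : Prop :=
  forall a, conv_dec L phi a ->
    forall x, is_inf a x -> L x /\ is_inf (fun n => phi (a n)) (phi x).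

Definition Sigma_complete (L : V -> Prop) (phi : V -> E) : Prop :=
  forall a, conv_inc L phi a ->
    forall x, is_sup a x -> L x /\ is_sup (fun n => phi (a n)) (phi x).

Definition vs_complete (L : V -> Prop) (phi : V -> E) : Prop :=
  Pi_complete L phi /\ Sigma_complete L phi.

End Extensions.

(* The hierarchy collapses at Q = (Lbar, phibar) exactly when Pi(Q) = Q = Sigma(Q).
   Pi(Q) = Q says that the infimum of every phibar-convergent decreasing sequence
   of Lbar lies in Lbar and that phibar maps it to the infimum of the values: this
   is Pi-completeness, and Sigma(Q) = Q dually gives Sigma-completeness. Being
   its own Pi-extension, phibar is moreover a valuation on the sublattice Lbar. *)
From mathcomp Require Import all_boot all_order all_algebra.

Section SelfExtension.
Context {d : Order.disp_t} {V : latticeType d} {E : porderZmodType}.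
Variables (L : V -> Prop) (phi : V -> E).

Lemma pi_ext_self_Pi_complete : pi_ext (L, phi) (L, phi) -> Pi_complete L phi.
Proof.
case=> [PiL_L [_ [_ Pi_phi]]] a conv_a x inf_x; split.
  by apply/PiL_L; exists a.
have [_ [_ [_ [e inf_e]]]] := conv_a.
by have /= -> := Pi_phi a x e conv_a inf_x inf_e.
Qed.

Lemma sigma_ext_self_Sigma_complete :
  sigma_ext (L, phi) (L, phi) -> Sigma_complete L phi.
Proof.
case=> [SigmaL_L [_ [_ Sigma_phi]]] a conv_a x sup_x; split.
  by apply/SigmaL_L; exists a.
have [_ [_ [_ [e sup_e]]]] := conv_a.
by have /= -> := Sigma_phi a x e conv_a sup_x sup_e.
Qed.

Lemma self_extensions_vs_complete :
  pi_ext (L, phi) (L, phi) -> sigma_ext (L, phi) (L, phi) -> vs_complete L phi.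
Proof.
move=> Pi_self Sigma_self; split.
- exact: pi_ext_self_Pi_complete.
- exact: sigma_ext_self_Sigma_complete.
Qed.

End SelfExtension.

Lemma vs_closure_self_extensions {d : Order.disp_t} {V : latticeType d}
    {E : porderZmodType} (L : V -> Prop) (phi : V -> E)
    (Lbar : V -> Prop) (phibar : V -> E) :
  vs_closure L phi Lbar phibar ->
  pi_ext (Lbar, phibar) (Lbar, phibar) /\ sigma_ext (Lbar, phibar) (Lbar, phibar).
Proof. by case=> [_ [_ [_ [_ [_ [_ [_ [_ [_ self_ext]]]]]]]]]. Qed.

Lemma pi_ext_valuation {d : Order.disp_t} {V : latticeType d} {E : porderZmodType}
    {p q : @pval d V E} :
  pi_ext p q -> sublattice q.1 /\ valuation q.1 q.2.
Proof. by case=> [_ [sub_q [val_q _]]]. Qed.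

Theorem lemma5p30 (d : Order.disp_t) (V : latticeType d) (E : porderZmodType)
    (L : V -> Prop) (phi : V -> E) (Lbar : V -> Prop) (phibar : V -> E) :
  valuation_system L phi ->
  vs_closure L phi Lbar phibar ->
  valuation_system Lbar phibar /\ vs_complete Lbar phibar.
Proof.
move=> [sdV [_ [po_E [Rc_E _]]]] /vs_closure_self_extensions [Pi_self Sigma_self].
have [sub_Lbar val_phibar] := pi_ext_valuation Pi_self.
split; first by [].
exact: self_extensions_vs_complete.
Qed.
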